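(* Let $L>0$, $\mathbb{T}=[0,L]$ with periodic boundary conditions, $N\ge1$, $D_i>0$, $h_{ij}\in\mathbb{R}$, and $K:\mathbb{T}\to\mathbb{R}$, $K\ge0$, a zero-mean probability density that is twice differentiable with $K'\in L^\infty(\mathbb{T})$. Let $u_0\in C^2(\mathbb{T})^N$ with $u_0(x)>0$ for all $x\in\mathbb{T}$, and let $u=(u_1,\dots,u_N)\in C^1((0,T_* ),L^2(\mathbb{T}))^N\cap C^0((0,T_* ),C^2(\mathbb{T}))^N$ be the solution of \[ \partial_tu_i=D_i\partial_x^2u_i-\partial_x\Big[u_i\,\partial_x\sum_{j=1}^Nh_{ij}(K\ast u_j)\Big],\quad i=1,\dots,N,\qquad u(\cdot,0)=u_0, \] where $T_*=\infty$ if $\|u(t)\|_{L^1}$ is bounded for all time and otherwise $T_*$ is the earliest time at which $\|u(t)\|_{L^1}=2\|u_0\|_{L^1}$. Then $u(x,t)>0$ (componentwise) for all $x\in\mathbb{T}$ and $t<T_*$.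
   Context: $(K\ast f)(x)=\int_0^LK(x-y)f(y)\,dy$ with periodic extension; for vector-valued $g$, $\|g\|_{L^1}=\sum_i\|g_i\|_{L^1}$. The solution is the unique (mild, and here classical) solution of the system constructed from the initial datum. *)

From Stdlib Require Import Reals.
From Coquelicot Require Import Coquelicot.
Open Scope R_scope.

(* Functions on the torus T = [0,L] are L-periodic functions on R. *)
Definition periodic (L : R) (f : R -> R) : Prop := forall x, f (x + L) = f x.

Definition conv (L : R) (K f : R -> R) (x : R) : R :=
  RInt (fun y => K (x - y) * f y) 0 L.

Definition L1norm (N : nat) (L : R) (g : nat -> R -> R) : R :=
  sum_f_R0 (fun i => RInt (fun x => Rabs (g i x)) 0 L) (N - 1).

Definition potential (N : nat) (L : R) (h : nat -> nat -> R) (K : R -> R)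
  (u : nat -> R -> R -> R) (i : nat) (x t : R) : R :=
  sum_f_R0 (fun j => h i j * conv L K (fun y => u j y t) x) (N - 1).

Definition flux (N : nat) (L : R) (h : nat -> nat -> R) (K : R -> R)
  (u : nat -> R -> R -> R) (i : nat) (x t : R) : R :=
  u i x t * Derive (fun z => potential N L h K u i z t) x.

Definition cont_within_tnonneg (f : R -> R -> R) (x t : R) : Prop :=
  filterlim (fun p : R * R => f (fst p) (snd p))
    (within (fun p : R * R => 0 <= snd p) (locally (x, t)))
    (locally (f x t)).

Definition cont2 (f : R -> R -> R) (x t : R) : Prop :=
  continuous (fun p : R * R => f (fst p) (snd p)) (x, t).

(* Maximum principle with an exponential barrier.  Expanding the drift,
   d_x (u_i d_x V_i) = d_x u_i d_x V_i + u_i d_x^2 V_i with d_x^2 V_i = sum_j h_ij K * d_x^2 u_j,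
   and since K is a probability density, |d_x^2 V_i| <= C on any compact time interval
   [del, t] inside (0, T_star), where the d_x^2 u_j are jointly continuous.  By continuity
   u_i > mu > 0 on [0, del].  If u_i - mu e^(-lam s), lam > C, had a first zero (t1, x1) in
   [del, t], then x1 would be a spatial minimum of u_i(., t1), so d_x u_i = 0 and d_x^2 u_i >= 0
   there, and the equation would give d_t u_i >= - C u_i > - lam u_i, the slope of the barrier:
   the contact from above is impossible. *)

From Stdlib Require Import Reals Lra Lia Classical ClassicalEpsilon.
From Coquelicot Require Import Coquelicot.
Open Scope R_scope.

Lemma ex_RInt_continuous_everywhere (G : R -> R) a b :
  (forall z, continuous G z) -> ex_RInt G a b.
Proof. intros HG. apply (@ex_RInt_continuous R_CompleteNormedModule). intros z _. apply HG. Qed.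

Lemma ex_derive_continuous_R (f : R -> R) x : ex_derive f x -> continuous f x.
Proof. apply (@ex_derive_continuous R_AbsRing R_NormedModule). Qed.

Lemma continuous_reflect (G : R -> R) c z :
  (forall y, continuous G y) -> continuous (fun y => G (c - y)) z.
Proof.
  intros HG. apply (continuous_comp (fun y => c - y) G); [|apply HG].
  apply (continuous_minus (fun _ => c) (fun y => y));
    [apply continuous_const | apply continuous_id].
Qed.

Lemma continuous_kernel_translate (K g : R -> R) x z :
  (forall y, continuous K y) -> (forall y, continuous g y) ->
  continuous (fun y => K y * g (x - y)) z.
Proof.
  intros HK Hg. apply (continuous_mult K (fun y => g (x - y)));
    [apply HK | now apply continuous_reflect].
Qed.

Lemma RInt_periodic_shift (G : R -> R) L a :
  (forall z, continuous G z) -> periodic L G -> RInt G a (a + L) = RInt G 0 L.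
Proof.
  intros HGc HGp.
  assert (HG : forall c d, ex_RInt G c d) by (intros; now apply ex_RInt_continuous_everywhere).
  assert (Htail : RInt G L (a + L) = RInt G 0 a).
  { assert (E := RInt_comp_lin G 1 L 0 a (HG _ _)).
    replace (1 * 0 + L) with L in E by ring. replace (1 * a + L) with (a + L) in E by ring.
    rewrite <- E. apply RInt_ext. intros y _.
    unfold scal; simpl; unfold mult; simpl. rewrite !Rmult_1_l. apply HGp. }
  rewrite <- (RInt_Chasles G a 0 (a + L)), <- (RInt_Chasles G 0 L (a + L)), Htail by apply HG.
  rewrite <- (opp_RInt_swap G 0 a) by apply HG. unfold plus, opp; simpl. ring.
Qed.

Lemma conv_eq_RInt_translate (L : R) (K f : R -> R) x :
  (forall z, continuous K z) -> (forall z, continuous f z) ->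
  periodic L K -> periodic L f ->
  conv L K f x = RInt (fun z => K z * f (x - z)) 0 L.
Proof.
  intros HK Hf HKp Hfp.
  set (G := fun z => K z * f (x - z)).
  assert (HGc : forall z, continuous G z) by (intros; now apply continuous_kernel_translate).
  assert (HGp : periodic L G).
  { intros z. unfold G. rewrite HKp, <- (Hfp (x - (z + L))). do 2 f_equal. ring. }
  rewrite <- (RInt_periodic_shift G L (x - L)) by assumption.
  replace (x - L + L) with x by ring.
  rewrite <- (opp_RInt_swap G) by now apply ex_RInt_continuous_everywhere.
  assert (E := RInt_comp_lin G (-1) x 0 L).
  replace (-1 * 0 + x) with x in E by ring. replace (-1 * L + x) with (x - L) in E by ring.
  rewrite <- E by now apply ex_RInt_continuous_everywhere.
  rewrite <- RInt_opp.
  - unfold conv. apply RInt_ext. intros y _. unfold G, scal, opp; simpl; unfold mult; simpl.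
    replace (-1 * y + x) with (x - y) by ring. replace (x - (x - y)) with y by ring. ring.
  - apply ex_RInt_continuous_everywhere. intros z.
    apply (continuous_ext (fun y => -1 * G (x - y))).
    { intros y. unfold scal; simpl; unfold mult; simpl. do 2 f_equal. ring. }
    apply (continuous_mult (fun _ => -1) (fun y => G (x - y))).
    + apply continuous_const.
    + now apply continuous_reflect.
Qed.

Lemma is_derive_RInt_translate (K g : R -> R) L x :
  (forall z, continuous K z) -> (forall z, ex_derive g z) ->
  (forall z, continuous (Derive g) z) ->
  is_derive (fun y => RInt (fun z => K z * g (y - z)) 0 L) x
    (RInt (fun z => K z * Derive g (x - z)) 0 L).
Proof.
  intros HK Hg Hg'.
  assert (Hd : forall z y, is_derive (fun y => K z * g (y - z)) y (K z * Derive g (y - z))).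
  { intros z y. apply is_derive_scal.
    apply (is_derive_ext (fun y => g (y - z))); [reflexivity|].
    evar (l : R). replace (Derive g (y - z)) with l; [apply is_derive_comp|]; subst l.
    - apply Derive_correct, Hg.
    - auto_derive; [exact I | reflexivity].
    - unfold scal; simpl; unfold mult; simpl. ring. }
  rewrite (RInt_ext _ (fun z => Derive (fun y => K z * g (y - z)) x))
    by (intros z _; symmetry; apply is_derive_unique, Hd).
  apply (is_derive_RInt_param (fun y z => K z * g (y - z))).
  - apply filter_forall. intros y z _. eexists. apply Hd.
  - intros z _. apply continuity_2d_pt_ext with (fun y z => K z * Derive g (y - z)).
    { intros y w. symmetry. apply is_derive_unique, Hd. }
    apply continuity_2d_pt_mult.
    + apply (continuity_1d_2d_pt_comp K (fun _ z => z)).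
      * apply continuity_pt_filterlim, HK.
      * apply continuity_2d_pt_id2.
    + apply (continuity_1d_2d_pt_comp (Derive g) (fun y z => y - z)).
      * apply continuity_pt_filterlim, Hg'.
      * apply continuity_2d_pt_minus; [apply continuity_2d_pt_id1 | apply continuity_2d_pt_id2].
  - apply filter_forall. intros y. apply ex_RInt_continuous_everywhere. intros z.
    apply continuous_kernel_translate; [exact HK|]. intros w. apply ex_derive_continuous_R, Hg.
Qed.

(* Convolutions written as [int K(z) g(x - z) dz], so that x-derivatives fall on [g] and
   [K] need only be continuous. *)
Definition kernel_sum (N : nat) (L : R) (h : nat -> nat -> R) (K : R -> R)
  (g : nat -> R -> R) (i : nat) (x : R) : R :=
  sum_f_R0 (fun j => h i j * RInt (fun z => K z * g j (x - z)) 0 L) (N - 1).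

Lemma is_derive_kernel_sum N L h K (g : nat -> R -> R) i x :
  (1 <= N)%nat -> (forall z, continuous K z) ->
  (forall j z, (j < N)%nat -> ex_derive (g j) z) ->
  (forall j z, (j < N)%nat -> continuous (Derive (g j)) z) ->
  is_derive (kernel_sum N L h K g i) x (kernel_sum N L h K (fun j => Derive (g j)) i x).
Proof.
  intros HN HK Hg Hg'. unfold kernel_sum.
  set (F := fun j y => h i j * RInt (fun z => K z * g j (y - z)) 0 L).
  apply (is_derive_ext (fun y => sum_n (fun j => F j y) (N - 1))); [intros; apply sum_n_Reals|].
  rewrite <- sum_n_Reals. apply (@is_derive_sum_n R_AbsRing R_NormedModule F). intros j Hj.
  apply is_derive_scal, is_derive_RInt_translate; [exact HK | |];
    intros z; [apply Hg | apply Hg']; lia.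
Qed.

Lemma potential_eq_kernel_sum N L h K (u : nat -> R -> R -> R) i x t :
  (1 <= N)%nat -> (forall z, continuous K z) -> periodic L K ->
  (forall j z, (j < N)%nat -> continuous (fun w => u j w t) z) ->
  (forall j, (j < N)%nat -> periodic L (fun w => u j w t)) ->
  potential N L h K u i x t = kernel_sum N L h K (fun j w => u j w t) i x.
Proof.
  intros HN HK HKp Hc Hp. apply sum_eq. intros j Hj. f_equal.
  apply conv_eq_RInt_translate; [exact HK | | exact HKp | ]; intros; [apply Hc | apply Hp]; lia.
Qed.

Lemma is_derive_flux N L h K (u : nat -> R -> R -> R) i x t :
  (1 <= N)%nat -> (i < N)%nat -> (forall z, continuous K z) -> periodic L K ->
  (forall j, (j < N)%nat -> periodic L (fun w => u j w t)) ->
  (forall j z, (j < N)%nat -> ex_derive (fun w => u j w t) z) ->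
  (forall j z, (j < N)%nat -> ex_derive (Derive (fun w => u j w t)) z) ->
  (forall j z, (j < N)%nat -> continuous (Derive (fun w => u j w t)) z) ->
  (forall j z, (j < N)%nat -> continuous (Derive (Derive (fun w => u j w t))) z) ->
  is_derive (fun z => flux N L h K u i z t) x
    (Derive (fun w => u i w t) x * kernel_sum N L h K (fun j => Derive (fun w => u j w t)) i x
     + u i x t * kernel_sum N L h K (fun j => Derive (Derive (fun w => u j w t))) i x).
Proof.
  intros HN Hi HK HKp Hp Hd1 Hd2 Hc1 Hc2.
  assert (Hpot : forall y, is_derive (fun z => potential N L h K u i z t) y
                   (kernel_sum N L h K (fun j => Derive (fun w => u j w t)) i y)).
  { intros y. apply (is_derive_ext (kernel_sum N L h K (fun j w => u j w t) i)).
    - intros z. symmetry. apply potential_eq_kernel_sum; try assumption.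
      intros j w Hj. apply ex_derive_continuous_R, Hd1, Hj.
    - now apply is_derive_kernel_sum. }
  apply (is_derive_ext
           (fun z => u i z t * kernel_sum N L h K (fun j => Derive (fun w => u j w t)) i z)).
  { intros z. unfold flux. f_equal. symmetry. apply is_derive_unique, Hpot. }
  apply (is_derive_mult (fun z => u i z t)); [ now apply Derive_correct, Hd1 | | exact Rmult_comm ].
  now apply is_derive_kernel_sum.
Qed.

Lemma Rabs_kernel_sum_le N L h K (g : nat -> R -> R) i x B :
  (1 <= N)%nat -> 0 < L -> (forall z, 0 <= K z) -> RInt K 0 L = 1 ->
  (forall z, continuous K z) -> (forall j z, (j < N)%nat -> continuous (g j) z) ->
  (forall j y, (j < N)%nat -> x - L <= y <= x -> Rabs (g j y) <= B) ->
  Rabs (kernel_sum N L h K g i x) <= sum_f_R0 (fun j => Rabs (h i j) * B) (N - 1).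
Proof.
  intros HN HL HKpos HKmass HK Hg HB. unfold kernel_sum.
  eapply Rle_trans; [apply sum_f_R0_triangle|]. apply sum_Rle. intros j Hj.
  rewrite Rabs_mult. apply Rmult_le_compat_l; [apply Rabs_pos|].
  assert (Hgj : forall z, continuous (g j) z) by (intros; apply Hg; lia).
  eapply Rle_trans.
  { apply abs_RInt_le; [lra|]. apply ex_RInt_continuous_everywhere.
    intros; now apply continuous_kernel_translate. }
  apply Rle_trans with (RInt (fun z => B * K z) 0 L).
  - apply RInt_le; [lra | | | ].
    + apply ex_RInt_continuous_everywhere. intros z.
      apply (continuous_comp (fun z => K z * g j (x - z)) Rabs); [|apply continuous_Rabs].
      now apply continuous_kernel_translate.
    + apply ex_RInt_continuous_everywhere. intros z.
      apply (continuous_mult (fun _ => B) K); [apply continuous_const | apply HK].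
    + intros z Hz. rewrite Rabs_mult, (Rabs_pos_eq (K z)), Rmult_comm by apply HKpos.
      apply Rmult_le_compat_r; [apply HKpos|]. apply HB; [lia | lra].
  - assert (E : RInt (fun z => B * K z) 0 L = B * RInt K 0 L)
      by (apply (RInt_scal K 0 L B); now apply ex_RInt_continuous_everywhere).
    rewrite E, HKmass. lra.
Qed.

Lemma is_derive_pos_strict_incr (w : R -> R) t l :
  is_derive w t l -> 0 < l ->
  exists e, 0 < e /\ forall k, 0 < k < e -> w (t - k) < w t < w (t + k).
Proof.
  intros Hd Hl. apply is_derive_Reals in Hd.
  destruct (Hd l Hl) as [e He]. exists e. split; [apply cond_pos|]. intros k Hk.
  assert (Hquot : forall k', k' <> 0 -> Rabs k' < e -> 0 < (w (t + k') - w t) / k').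
  { intros k' Hk' Hk'e. specialize (He k' Hk' Hk'e). apply Rabs_def2 in He. lra. }
  split.
  - assert (H := Hquot (- k) ltac:(lra) ltac:(rewrite Rabs_Ropp, Rabs_pos_eq; lra)).
    unfold Rdiv in H. rewrite Rinv_opp in H.
    assert (0 < / k) by (apply Rinv_0_lt_compat; lra).
    replace (t - k) with (t + - k) by ring. nra.
  - assert (H := Hquot k ltac:(lra) ltac:(rewrite Rabs_pos_eq; lra)).
    assert (0 < k) by lra. unfold Rdiv in H.
    assert (0 < / k) by (apply Rinv_0_lt_compat; lra). nra.
Qed.

Lemma Derive_eq_0_at_min (g : R -> R) x :
  (forall y, g x <= g y) -> ex_derive g x -> Derive g x = 0.
Proof.
  intros Hmin Hd. rewrite <- (Derive_Reals g x (ex_derive_Reals_0 g x Hd)).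
  apply (deriv_minimum g (x - 1) (x + 1)); [lra | lra | intros; apply Hmin].
Qed.

Lemma Derive2_nonneg_at_min (g : R -> R) x :
  (forall y, g x <= g y) -> (forall y, ex_derive g y) -> ex_derive (Derive g) x ->
  0 <= Derive (Derive g) x.
Proof.
  intros Hmin Hg Hg2. apply Rnot_lt_le. intros Hneg.
  assert (Hopp : is_derive (fun y => - Derive g y) x (- Derive (Derive g) x))
    by (apply (is_derive_opp (Derive g)), Derive_correct, Hg2).
  destruct (is_derive_pos_strict_incr _ _ _ Hopp ltac:(lra)) as [e [He Hincr]].
  rewrite (Derive_eq_0_at_min g x Hmin (Hg x)) in Hincr.
  destruct (MVT_cor2 g (Derive g) x (x + e / 2)) as [c [Hmvt Hc]]; [lra| |].
  { intros c _. apply is_derive_Reals, Derive_correct, Hg. }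
  assert (Hgc : Derive g c < 0).
  { replace c with (x + (c - x)) by ring. specialize (Hincr (c - x) ltac:(lra)). lra. }
  specialize (Hmin (x + e / 2)). nra.
Qed.

Lemma is_derive_nonpos_at_first_zero (w : R -> R) t0 t l :
  is_derive w t l -> w t = 0 -> t0 < t -> (forall r, t0 <= r < t -> 0 < w r) -> l <= 0.
Proof.
  intros Hd Hw Ht Hpos. apply Rnot_lt_le. intros Hl.
  destruct (is_derive_pos_strict_incr w t l Hd Hl) as [e [He Hincr]].
  set (k := Rmin e (t - t0) / 2).
  assert (Hk : 0 < k < e /\ k <= t - t0).
  { unfold k. assert (Rmin e (t - t0) <= e) by apply Rmin_l.
    assert (Rmin e (t - t0) <= t - t0) by apply Rmin_r.
    assert (0 < Rmin e (t - t0)) by (apply Rmin_glb_lt; lra). lra. }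
  specialize (Hincr k (proj1 Hk)). specialize (Hpos (t - k) ltac:(lra)). lra.
Qed.

Lemma cont_within_tnonneg_ball (f : R -> R -> R) x t :
  cont_within_tnonneg f x t -> forall eps : posreal, exists rho : posreal,
  forall x' t', Rabs (x' - x) < rho -> Rabs (t' - t) < rho -> 0 <= t' ->
  Rabs (f x' t' - f x t) < eps.
Proof.
  intros Hf eps. unfold cont_within_tnonneg in Hf. rewrite filterlim_locally in Hf.
  destruct (Hf eps) as [rho Hrho].
  exists rho. intros x' t' Hx Ht Ht0. now apply (Hrho (x', t')).
Qed.

Lemma cont_within_tnonneg_minus (f : R -> R -> R) (g : R -> R) x t :
  cont_within_tnonneg f x t -> continuous g t ->
  cont_within_tnonneg (fun y s => f y s - g s) x t.
Proof.
  intros Hf Hg. unfold cont_within_tnonneg.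
  apply (filterlim_comp_2 (H := locally (opp (g t))) _ (fun p : R * R => opp (g (snd p))) plus Hf).
  - apply (filterlim_comp _ _ _ snd (fun s => opp (g s)) _ (locally t)).
    + eapply filterlim_filter_le_1; [apply filter_le_within | apply continuous_snd].
    + exact (@continuous_opp R_UniformSpace R_AbsRing R_NormedModule g t Hg).
  - exact (@filterlim_plus R_AbsRing R_NormedModule (f x t) (opp (g t))).
Qed.

Lemma cont_within_tnonneg_gt_persist (f : R -> R -> R) a b t c :
  0 <= t -> (forall x, a <= x <= b -> cont_within_tnonneg f x t) ->
  (forall x, a <= x <= b -> c < f x t) ->
  exists d, 0 < d /\ forall x s, a <= x <= b -> t <= s < t + d -> c < f x s.
Proof.
  intros Ht Hcont Hgt.
  assert (Hloc : forall x, {rho : posreal | a <= x <= b -> forall x' s,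
             Rabs (x' - x) < rho -> t <= s < t + rho -> c < f x' s}).
  { intros x. apply constructive_indefinite_description.
    destruct (classic (a <= x <= b)) as [Hx|Hx].
    - destruct (cont_within_tnonneg_ball f x t (Hcont x Hx)
                  (mkposreal _ (proj2 (Rlt_0_minus _ _) (Hgt x Hx)))) as [rho Hrho].
      exists rho. intros _ x' s Hx' Hs.
      assert (H := Hrho x' s Hx' ltac:(rewrite Rabs_pos_eq; lra) ltac:(lra)).
      apply Rabs_def2 in H. simpl in H. lra.
    - exists (mkposreal 1 Rlt_0_1). intros Hx'. contradiction. }
  destruct (compactness_value_1d a b (fun x => proj1_sig (Hloc x))) as [d Hd].
  exists d. split; [apply cond_pos|]. intros x s Hx Hs.
  apply NNPP. intros Hn. apply (Hd x Hx). intros [x0 [Hx0 [Hxx0 Hdx0]]].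
  apply Hn. apply (proj2_sig (Hloc x0) Hx0); [exact Hxx0 | lra].
Qed.

Lemma cont_within_tnonneg_ge_left (f : R -> R -> R) x t0 t c :
  0 <= t0 < t -> (forall r, t0 <= r < t -> c < f x r) ->
  cont_within_tnonneg f x t -> c <= f x t.
Proof.
  intros Ht Hlt Hf. apply Rnot_lt_le. intros Hft.
  destruct (cont_within_tnonneg_ball f x t Hf (mkposreal _ (proj2 (Rlt_0_minus _ _) Hft)))
    as [rho Hrho].
  set (r := Rmax t0 (t - rho / 2)).
  assert (Hr : t0 <= r < t /\ t - rho / 2 <= r).
  { unfold r. assert (0 < rho) by apply cond_pos.
    split; [split; [apply Rmax_l | apply Rmax_lub_lt; lra] | apply Rmax_r]. }
  assert (H := Hrho x r ltac:(rewrite Rminus_diag, Rabs_R0; apply cond_pos)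
                 ltac:(rewrite Rabs_left; lra) ltac:(lra)).
  apply Rabs_def2 in H. simpl in H. specialize (Hlt r (proj1 Hr)). lra.
Qed.

Lemma sup_positive_times (v : R -> R -> R) a b t0 t1 :
  0 <= t0 <= t1 -> (forall x, a <= x <= b -> 0 < v x t0) ->
  (forall x s, a <= x <= b -> t0 <= s <= t1 -> cont_within_tnonneg v x s) ->
  exists ts, t0 <= ts <= t1 /\ (forall r x, t0 <= r < ts -> a <= x <= b -> 0 < v x r) /\
    (ts = t1 \/ exists x, a <= x <= b /\ v x ts <= 0).
Proof.
  intros Ht Hinit Hcont.
  set (Good := fun s => t0 <= s <= t1 /\
                 forall r x, t0 <= r <= s -> a <= x <= b -> 0 < v x r).
  assert (Hgood0 : Good t0).
  { split; [lra|]. intros r x Hr Hx. replace r with t0 by lra. now apply Hinit. }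
  destruct (completeness Good) as [ts [Hub Hlub]];
    [exists t1; now intros s [Hs _] | now exists t0 |].
  assert (Hts : t0 <= ts <= t1) by (split; [now apply Hub | apply Hlub; now intros s [Hs _]]).
  assert (Hbefore : forall r x, t0 <= r < ts -> a <= x <= b -> 0 < v x r).
  { intros r x Hr Hx. apply NNPP. intros Hn.
    enough (ts <= r) by lra. apply Hlub. intros s [Hs Hpos]. apply Rnot_lt_le. intros Hrs.
    apply Hn, Hpos; [lra | exact Hx]. }
  exists ts. split; [exact Hts|]. split; [exact Hbefore|].
  destruct (Rle_lt_or_eq_dec ts t1 (proj2 Hts)) as [Hlt|]; [right|now left].
  apply NNPP. intros Hpos.
  destruct (cont_within_tnonneg_gt_persist v a b ts 0) as [d [Hd Hnext]].
  - lra.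
  - intros x Hx. apply Hcont; lra.
  - intros x Hx. apply Rnot_le_lt. intros Hle. apply Hpos. now exists x.
  - set (s1 := Rmin t1 (ts + d / 2)).
    assert (Hs1 : ts < s1 <= t1 /\ s1 <= ts + d / 2).
    { unfold s1. split; [split; [apply Rmin_glb_lt; lra | apply Rmin_l] | apply Rmin_r]. }
    enough (Hgood : Good s1) by (specialize (Hub s1 Hgood); lra).
    split; [lra|]. intros r x Hr Hx. destruct (Rlt_or_le r ts).
    + apply Hbefore; [lra | exact Hx].
    + apply Hnext; [exact Hx | lra].
Qed.

Lemma first_zero_or_positive (v : R -> R -> R) a b t0 t1 :
  0 <= t0 <= t1 -> (forall x, a <= x <= b -> 0 < v x t0) ->
  (forall x s, a <= x <= b -> t0 <= s <= t1 -> cont_within_tnonneg v x s) ->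
  (forall x s, a <= x <= b -> t0 <= s <= t1 -> 0 < v x s) \/
  exists s x, t0 < s <= t1 /\ a <= x <= b /\ v x s = 0 /\
    (forall y, a <= y <= b -> 0 <= v y s) /\ (forall r, t0 <= r < s -> 0 < v x r).
Proof.
  intros Ht Hinit Hcont.
  destruct (sup_positive_times v a b t0 t1 Ht Hinit Hcont) as [ts [Hts [Hbefore Hend]]].
  destruct (classic (exists x, a <= x <= b /\ v x ts <= 0)) as [[x [Hx Hvx]] | Hpos].
  - assert (Hts0 : t0 < ts).
    { destruct (Rle_lt_or_eq_dec t0 ts (proj1 Hts)) as [|<-]; [easy|].
      specialize (Hinit x Hx). lra. }
    assert (Hnonneg : forall y, a <= y <= b -> 0 <= v y ts).
    { intros y Hy. apply (cont_within_tnonneg_ge_left v y t0); [lra | | apply Hcont; lra].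
      intros r Hr. now apply Hbefore. }
    right. exists ts, x. split; [lra|]. split; [exact Hx|].
    split; [specialize (Hnonneg x Hx); lra|]. split; [exact Hnonneg|].
    intros r Hr. now apply Hbefore.
  - destruct Hend as [<- | Hzero]; [left | contradiction].
    intros x s Hx Hs. destruct (Rlt_or_le s ts) as [|Hge]; [apply Hbefore; [lra | exact Hx]|].
    replace s with ts by lra. apply Rnot_le_lt. intros Hle. apply Hpos. now exists x.
Qed.

Lemma cont2_continuous_slice (f : R -> R -> R) x t :
  cont2 f x t -> continuous (fun z => f z t) x.
Proof.
  intros Hf. apply (continuous_comp_2 (fun z => z) (fun _ => t) f);
    [apply continuous_id | apply continuous_const | exact Hf].
Qed.

Lemma Rabs_le_unit_steps (F : nat -> R) n :
  (forall k, (k < n)%nat -> Rabs (F (S k) - F k) < 1) -> Rabs (F n) <= Rabs (F O) + INR n.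
Proof.
  induction n as [|n IH]; intros Hstep; [simpl; lra|].
  rewrite S_INR. specialize (IH ltac:(intros k Hk; apply Hstep; lia)).
  specialize (Hstep n ltac:(lia)).
  replace (F (S n)) with (F n + (F (S n) - F n)) by ring.
  pose proof (Rabs_triang (F n) (F (S n) - F n)). lra.
Qed.

Lemma continuity_2d_pt_bounded_rectangle (f : R -> R -> R) a b c d :
  a <= b -> c <= d ->
  (forall x t, a <= x <= b -> c <= t <= d -> continuity_2d_pt f x t) ->
  exists B, forall x t, a <= x <= b -> c <= t <= d -> Rabs (f x t) <= B.
Proof.
  intros Hab Hcd Hf.
  destruct (uniform_continuity_2d f a b c d Hf (mkposreal 1 Rlt_0_1)) as [del Hdel].
  assert (Hdel0 := cond_pos del).
  destruct (nfloor_ex ((b - a + (d - c)) / del)) as [n0 Hn0]; [apply Rdiv_le_0_compat; lra|].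
  set (n := S n0).
  assert (Hn : b - a + (d - c) < INR n * del).
  { unfold n. rewrite S_INR. destruct Hn0 as [_ Hn0].
    apply (Rmult_lt_compat_r del) in Hn0; [|exact Hdel0].
    unfold Rdiv in Hn0. rewrite Rmult_assoc, Rinv_l, Rmult_1_r in Hn0 by lra. exact Hn0. }
  assert (Hnpos : 0 < INR n) by apply lt_0_INR, Nat.lt_0_succ.
  exists (Rabs (f a c) + INR n). intros x t Hx Ht.
  (* walk from (a, c) to (x, t) in n steps, each shorter than [del] *)
  set (hx := (x - a) / INR n). set (ht := (t - c) / INR n).
  assert (Hstep : 0 <= hx < del /\ 0 <= ht < del).
  { unfold hx, ht. repeat split; try (apply Rdiv_le_0_compat; lra);
      apply (Rmult_lt_reg_r (INR n)); try exact Hnpos;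
      unfold Rdiv; rewrite Rmult_assoc, Rinv_l, Rmult_1_r by lra; lra. }
  assert (Hend : a + INR n * hx = x /\ c + INR n * ht = t) by (unfold hx, ht; split; field; lra).
  destruct Hend as [Ex Et]. rewrite <- Ex, <- Et.
  replace (Rabs (f a c)) with (Rabs (f (a + INR O * hx) (c + INR O * ht)))
    by (simpl; do 3 f_equal; ring).
  apply (Rabs_le_unit_steps (fun k => f (a + INR k * hx) (c + INR k * ht))).
  intros k Hk. apply le_INR in Hk. rewrite S_INR in *. pose proof (pos_INR k).
  apply Hdel.
  1-4: split; nra.
  - replace (a + (INR k + 1) * hx - (a + INR k * hx)) with hx by ring. rewrite Rabs_pos_eq; lra.
  - replace (c + (INR k + 1) * ht - (c + INR k * ht)) with ht by ring. rewrite Rabs_pos_eq; lra.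
Qed.

Lemma ex_bound_finite_family (P : nat -> R -> Prop) N :
  (forall j B B', B <= B' -> P j B -> P j B') ->
  (forall j, (j < N)%nat -> exists B, P j B) ->
  exists B, forall j, (j < N)%nat -> P j B.
Proof.
  intros Hmono. induction N as [|N IH]; intros Hex.
  - exists 0. intros j Hj. lia.
  - destruct IH as [B1 HB1]; [intros j Hj; apply Hex; lia|].
    destruct (Hex N) as [B2 HB2]; [lia|].
    exists (Rmax B1 B2). intros j Hj. destruct (Nat.eq_dec j N) as [->|Hne].
    + apply Hmono with B2; [apply Rmax_r | exact HB2].
    + apply Hmono with B1; [apply Rmax_l | apply HB1; lia].
Qed.

Lemma periodic_INR (L : R) (f : R -> R) n y :
  periodic L f -> f (y + INR n * L) = f y.
Proof.
  intros Hp. induction n as [|n IH]; [simpl; f_equal; ring|].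
  rewrite S_INR. replace (y + (INR n + 1) * L) with (y + INR n * L + L) by ring.
  rewrite Hp. exact IH.
Qed.

Lemma periodic_reduce (L : R) (f : R -> R) x :
  0 < L -> periodic L f -> exists y, 0 <= y <= L /\ f x = f y.
Proof.
  intros HL Hp.
  assert (Hfloor : forall z, 0 <= z -> exists n, INR n * L <= z < INR n * L + L).
  { intros z Hz. destruct (nfloor_ex (z / L)) as [n [H1 H2]]; [now apply Rdiv_le_0_compat|].
    exists n. apply (Rmult_le_compat_r L) in H1; [|lra]. apply (Rmult_lt_compat_r L) in H2; [|lra].
    unfold Rdiv in H1, H2. rewrite Rmult_assoc, Rinv_l, Rmult_1_r in H1, H2 by lra. lra. }
  destruct (Hfloor (Rabs x) (Rabs_pos x)) as [m [_ Hm]].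
  set (x' := x + INR (S m) * L).
  assert (Hx' : 0 <= x').
  { unfold x'. rewrite S_INR. assert (- x <= Rabs x) by (rewrite <- Rabs_Ropp; apply RRle_abs). lra. }
  destruct (Hfloor x' Hx') as [k Hk].
  exists (x' - INR k * L). split; [lra|].
  rewrite <- (periodic_INR L f k (x' - INR k * L)) by exact Hp.
  replace (x' - INR k * L + INR k * L) with x' by ring.
  symmetry. now apply periodic_INR.
Qed.

Section Positivity.

Variables (L : R) (N : nat) (D : nat -> R) (h : nat -> nat -> R) (K : R -> R)
  (u : nat -> R -> R -> R) (Tstar : Rbar).

Hypotheses (HL : 0 < L) (HN : (1 <= N)%nat) (HD : forall i, (i < N)%nat -> 0 < D i)
  (HKper : periodic L K) (HKpos : forall x, 0 <= K x) (HKmass : RInt K 0 L = 1)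
  (HKc : forall x, continuous K x).

Hypotheses
  (Hper : forall i t, (i < N)%nat -> 0 <= t -> Rbar_lt t Tstar ->
            periodic L (fun x => u i x t))
  (Hcont : forall i x t, (i < N)%nat -> 0 <= t -> Rbar_lt t Tstar ->
            cont_within_tnonneg (u i) x t)
  (Hdx1 : forall i x t, (i < N)%nat -> 0 < t -> Rbar_lt t Tstar ->
            ex_derive (fun z => u i z t) x)
  (Hdx2 : forall i x t, (i < N)%nat -> 0 < t -> Rbar_lt t Tstar ->
            ex_derive (fun z => Derive (fun w => u i w t) z) x)
  (Hcdx1 : forall i x t, (i < N)%nat -> 0 < t -> Rbar_lt t Tstar ->
            cont2 (fun z s => Derive (fun w => u i w s) z) x t)
  (Hcdx2 : forall i x t, (i < N)%nat -> 0 < t -> Rbar_lt t Tstar ->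
            cont2 (fun z s => Derive_n (fun w => u i w s) 2 z) x t)
  (Hpde : forall i x t, (i < N)%nat -> 0 < t -> Rbar_lt t Tstar ->
            is_derive (fun s => u i x s) t
              (D i * Derive_n (fun z => u i z t) 2 x
               - Derive (fun z => flux N L h K u i z t) x)).

Let uxx (j : nat) (t : R) : R -> R := Derive (Derive (fun w => u j w t)).

Lemma uxx_bounded del t0 :
  0 < del <= t0 -> Rbar_lt t0 Tstar ->
  exists B, forall j y s, (j < N)%nat -> - L <= y <= L -> del <= s <= t0 -> Rabs (uxx j s y) <= B.
Proof.
  intros Hdel HtT.
  destruct (ex_bound_finite_family (fun j B => forall y s, - L <= y <= L -> del <= s <= t0 ->
              Rabs (uxx j s y) <= B) N) as [B HB].
  - intros j B B' HBB' H y s Hy Hs. specialize (H y s Hy Hs). lra.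
  - intros j Hj. apply continuity_2d_pt_bounded_rectangle; [lra | lra |].
    intros y s _ Hs. apply continuity_2d_pt_filterlim, (Hcdx2 j y s Hj); [lra|].
    apply (Rbar_le_lt_trans s t0 Tstar); [simpl; lra | exact HtT].
  - exists B. intros j y s Hj. now apply HB.
Qed.

Lemma is_derive_flux_solution i x t :
  (i < N)%nat -> 0 < t -> Rbar_lt t Tstar ->
  is_derive (fun z => flux N L h K u i z t) x
    (Derive (fun w => u i w t) x * kernel_sum N L h K (fun j => Derive (fun w => u j w t)) i x
     + u i x t * kernel_sum N L h K (fun j => uxx j t) i x).
Proof.
  intros Hi Ht HtT. apply is_derive_flux; try assumption.
  - intros j Hj. apply Hper; [assumption | lra | assumption].
  - intros j z Hj. now apply Hdx1.
  - intros j z Hj. now apply Hdx2.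
  - intros j z Hj. exact (cont2_continuous_slice _ z t (Hcdx1 j z t Hj Ht HtT)).
  - intros j z Hj. exact (cont2_continuous_slice _ z t (Hcdx2 j z t Hj Ht HtT)).
Qed.

Lemma no_first_contact i x1 t1 del mu lam :
  (i < N)%nat -> 0 < del < t1 -> Rbar_lt t1 Tstar -> 0 < mu ->
  Rabs (kernel_sum N L h K (fun j => uxx j t1) i x1) < lam ->
  (forall y, 0 <= y <= L -> mu * exp (- lam * t1) <= u i y t1) ->
  u i x1 t1 = mu * exp (- lam * t1) ->
  (forall r, del <= r < t1 -> mu * exp (- lam * r) < u i x1 r) -> False.
Proof.
  intros Hi Ht1 HtT Hmu Hlam Habove Hcontact Hbefore.
  set (g := fun w => u i w t1).
  set (P := kernel_sum N L h K (fun j => uxx j t1) i x1).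
  assert (Hmin : forall y, g x1 <= g y).
  { intros y. destruct (periodic_reduce L g y HL (Hper i t1 Hi ltac:(lra) HtT)) as [y' [Hy' ->]].
    unfold g. rewrite Hcontact. now apply Habove. }
  assert (Hg : forall y, ex_derive g y) by (intros y; exact (Hdx1 i y t1 Hi ltac:(lra) HtT)).
  assert (Hgx : Derive g x1 = 0) by now apply Derive_eq_0_at_min.
  assert (Hgxx : 0 <= Derive (Derive g) x1)
    by exact (Derive2_nonneg_at_min g x1 Hmin Hg (Hdx2 i x1 t1 Hi ltac:(lra) HtT)).
  assert (Hflux : Derive (fun z => flux N L h K u i z t1) x1 = u i x1 t1 * P).
  { apply is_derive_unique.
    replace (u i x1 t1 * P)
      with (Derive g x1 * kernel_sum N L h K (fun j => Derive (fun w => u j w t1)) i x1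
            + u i x1 t1 * P) by (rewrite Hgx; ring).
    apply is_derive_flux_solution; [exact Hi | lra | exact HtT]. }
  assert (Hu := Hpde i x1 t1 Hi ltac:(lra) HtT).
  change (Derive_n (fun z => u i z t1) 2 x1) with (Derive (Derive g) x1) in Hu.
  rewrite Hflux in Hu.
  assert (Hb : is_derive (fun s => mu * exp (- lam * s)) t1 (- lam * (mu * exp (- lam * t1))))
    by (auto_derive; [exact I | ring]).
  assert (Hsign : D i * Derive (Derive g) x1 - u i x1 t1 * P
                  - - lam * (mu * exp (- lam * t1)) <= 0).
  { apply (is_derive_nonpos_at_first_zero (fun s => u i x1 s - mu * exp (- lam * s)) del t1).
    - exact (is_derive_minus _ _ _ _ _ Hu Hb).
    - rewrite Hcontact. ring.
    - lra.
    - intros r Hr. specialize (Hbefore r Hr). lra. }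
  rewrite Hcontact in Hsign.
  assert (HP : P < lam) by (apply Rle_lt_trans with (Rabs P); [apply Rle_abs | exact Hlam]).
  assert (HE : 0 < mu * exp (- lam * t1)) by (apply Rmult_lt_0_compat; [lra | apply exp_pos]).
  assert (0 <= D i * Derive (Derive g) x1)
    by (apply Rmult_le_pos; [apply Rlt_le, HD, Hi | exact Hgxx]).
  nra.
Qed.

Lemma solution_pos_after i t0 del mu :
  (i < N)%nat -> 0 < del <= t0 -> Rbar_lt t0 Tstar -> 0 < mu ->
  (forall x, 0 <= x <= L -> mu < u i x del) -> forall x, 0 < u i x t0.
Proof.
  intros Hi Hdel HtT Hmu Hinit x.
  destruct (uxx_bounded del t0 Hdel HtT) as [B HB].
  set (C := sum_f_R0 (fun j => Rabs (h i j) * B) (N - 1)).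
  set (lam := Rabs C + 1).
  assert (Hbarrier : forall s, 0 < s -> 0 < mu * exp (- lam * s) < mu).
  { intros s Hs. assert (0 < lam) by (unfold lam; pose proof (Rabs_pos C); lra).
    split; [apply Rmult_lt_0_compat; [lra | apply exp_pos]|].
    rewrite <- (Rmult_1_r mu) at 2. apply Rmult_lt_compat_l; [lra|].
    rewrite <- exp_0. apply exp_increasing. nra. }
  assert (HTs : forall s, s <= t0 -> Rbar_lt s Tstar)
    by (intros s Hs; apply (Rbar_le_lt_trans s t0 Tstar); [simpl; lra | exact HtT]).
  destruct (first_zero_or_positive (fun y s => u i y s - mu * exp (- lam * s)) 0 L del t0)
    as [Hpos | [t1 [x1 [Ht1 [Hx1 [Hzero [Hnonneg Hleft]]]]]]].
  - lra.
  - intros y Hy. specialize (Hinit y Hy). specialize (Hbarrier del (proj1 Hdel)). lra.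
  - intros y s Hy Hs. apply cont_within_tnonneg_minus.
    + apply Hcont; [exact Hi | lra | apply HTs; lra].
    + apply ex_derive_continuous_R. auto_derive. exact I.
  - destruct (periodic_reduce L (fun y => u i y t0) x HL (Hper i t0 Hi ltac:(lra) HtT))
      as [y [Hy ->]].
    specialize (Hpos y t0 Hy ltac:(lra)). specialize (Hbarrier t0 ltac:(lra)). simpl in Hpos. lra.
  - exfalso. apply (no_first_contact i x1 t1 del mu lam); try assumption;
      [lra | apply HTs; lra | | | | ].
    + apply Rle_lt_trans with C; [|unfold lam; pose proof (Rle_abs C); lra].
      apply Rabs_kernel_sum_le; try assumption.
      * intros j z Hj. apply (cont2_continuous_slice (fun z s => uxx j s z)), Hcdx2;
          [exact Hj | lra | apply HTs; lra].
      * intros j y Hj Hy. apply HB; [exact Hj | lra | lra].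
    + intros y Hy. specialize (Hnonneg y Hy). simpl in Hnonneg. lra.
    + simpl in Hzero. lra.
    + intros r Hr. specialize (Hleft r Hr). simpl in Hleft. lra.
Qed.

End Positivity.

Theorem lemma3p9
  (L : R) (N : nat) (D : nat -> R) (h : nat -> nat -> R) (K : R -> R)
  (u0 : nat -> R -> R) (u : nat -> R -> R -> R) (Tstar : Rbar)
  (* parameters *)
  (HL : 0 < L) (HN : (1 <= N)%nat)
  (HD : forall i, (i < N)%nat -> 0 < D i)
  (* kernel: nonnegative, periodic, probability density with zero mean,
     twice differentiable, K' bounded *)
  (HKper : periodic L K)
  (HKpos : forall x, 0 <= K x)
  (HKmass : RInt K 0 L = 1)
  (HKmean : RInt (fun x => x * K x) (- (L / 2)) (L / 2) = 0)
  (HK1 : forall x, ex_derive K x)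
  (HK2 : forall x, ex_derive (Derive K) x)
  (HK'bnd : exists M, forall x, Rabs (Derive K x) <= M)
  (* initial datum: C^2, periodic, positive *)
  (Hu0per : forall i, (i < N)%nat -> periodic L (u0 i))
  (Hu0d1 : forall i x, (i < N)%nat -> ex_derive (u0 i) x)
  (Hu0d2 : forall i x, (i < N)%nat -> ex_derive (Derive (u0 i)) x)
  (Hu0c2 : forall i x, (i < N)%nat -> continuous (Derive_n (u0 i) 2) x)
  (Hu0pos : forall i x, (i < N)%nat -> 0 < u0 i x)
  (* maximal time *)
  (HTpos : Rbar_lt 0 Tstar)
  (HTdef :
     (Tstar = p_infty /\
        exists M, forall t, 0 <= t -> L1norm N L (fun i x => u i x t) <= M)
     \/
     (exists T, Tstar = Finite T /\
        filterlim (fun t => L1norm N L (fun i x => u i x t)) (at_left T)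
          (locally (2 * L1norm N L u0)) /\
        forall t, 0 <= t < T ->
          L1norm N L (fun i x => u i x t) <> 2 * L1norm N L u0))
  (* the (classical) solution *)
  (Hinit : forall i x, (i < N)%nat -> u i x 0 = u0 i x)
  (Hper : forall i t, (i < N)%nat -> 0 <= t -> Rbar_lt t Tstar ->
            periodic L (fun x => u i x t))
  (Hcont : forall i x t, (i < N)%nat -> 0 <= t -> Rbar_lt t Tstar ->
            cont_within_tnonneg (u i) x t)
  (Hdx1 : forall i x t, (i < N)%nat -> 0 < t -> Rbar_lt t Tstar ->
            ex_derive (fun z => u i z t) x)
  (Hdx2 : forall i x t, (i < N)%nat -> 0 < t -> Rbar_lt t Tstar ->
            ex_derive (fun z => Derive (fun w => u i w t) z) x)
  (Hcdx1 : forall i x t, (i < N)%nat -> 0 < t -> Rbar_lt t Tstar ->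
            cont2 (fun z s => Derive (fun w => u i w s) z) x t)
  (Hcdx2 : forall i x t, (i < N)%nat -> 0 < t -> Rbar_lt t Tstar ->
            cont2 (fun z s => Derive_n (fun w => u i w s) 2 z) x t)
  (Hflux : forall i x t, (i < N)%nat -> 0 < t -> Rbar_lt t Tstar ->
            ex_derive (fun z => flux N L h K u i z t) x)
  (Hpde : forall i x t, (i < N)%nat -> 0 < t -> Rbar_lt t Tstar ->
            is_derive (fun s => u i x s) t
              (D i * Derive_n (fun z => u i z t) 2 x
               - Derive (fun z => flux N L h K u i z t) x)) :
  forall i x t, (i < N)%nat -> 0 <= t -> Rbar_lt t Tstar -> 0 < u i x t.
Proof.
  intros i x t Hi Ht HtT.
  assert (HKc : forall z, continuous K z)
    by (intros z; apply ex_derive_continuous_R, HK1).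
  destruct (Req_dec t 0) as [->|Ht0]; [rewrite Hinit by exact Hi; now apply Hu0pos|].
  destruct (continuity_ab_min (u0 i) 0 L) as [xm [Hxm _]]; [lra | |].
  { intros z _. apply continuity_pt_filterlim, ex_derive_continuous_R, Hu0d1, Hi. }
  set (mu := u0 i xm / 2).
  assert (Hmu : 0 < mu < u0 i xm) by (unfold mu; pose proof (Hu0pos i xm Hi); lra).
  destruct (cont_within_tnonneg_gt_persist (u i) 0 L 0 mu) as [d [Hd Hnear0]].
  - lra.
  - intros z _. now apply Hcont; [| lra |].
  - intros z Hz. rewrite Hinit by exact Hi. specialize (Hxm z Hz). lra.
  - assert (Hdel : 0 < Rmin (d / 2) t <= t) by (split; [apply Rmin_glb_lt | apply Rmin_r]; lra).
    apply (solution_pos_after L N D h K u Tstar) with (del := Rmin (d / 2) t) (mu := mu);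
      try assumption.
    + lra.
    + intros z Hz. apply Hnear0; [exact Hz|]. pose proof (Rmin_l (d / 2) t). lra.
Qed.
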